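(* Let $f\in C^2(r_{\mathcal{C}},\infty)$ with $f(r)>0$ for all $r>r_{\mathcal{C}}$, and let $X=f(r)\partial_r$. Then for every (sufficiently regular) function $\psi$ on the expanding region of Schwarzschild–de Sitter, $$\square_g(X\psi)=X(\square_g\psi)+\frac{f^2}{r^2}\partial_r\Big(\frac{r^2\phi^{-2}}{f^2}\Big)\partial_r(X\psi)+\frac{f^2}{r^2}\partial_r^2\Big(\frac{r^2\phi^{-2}}{f}\Big)\partial_r\psi+2f\phi^4\Big(\frac1r-\frac{3m}{r^2}\Big)\partial_t^2\psi+\frac{2f}{r}\square_g\psi.$$
   Context: Fix $\Lambda>0$, $0<3m<1/\sqrt\Lambda$; $D(r)=\frac{\Lambda}{3}r^2-1+\frac{2m}{r}$, $r_{\mathcal{C}}$ its largest positive root; expanding region $(r_{\mathcal{C}},\infty)_r\times\mathbb{R}_t\times\mathbb{S}^2$ with $g=-D^{-1}dr^2+Ddt^2+r^2\gamma_{\mathbb{S}^2}$, lapse $\phi=D^{-1/2}$, and $\square_g\psi=\phi^2\partial_t^2\psi-r^{-2}\partial_r(r^2\phi^{-2}\partial_r\psi)+r^{-2}\Delta_{\mathbb{S}^2}\psi$. *)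

From Stdlib Require Import Reals Lra List.
From Coquelicot Require Import Coquelicot.
Open Scope R_scope.

Definition Dsds (Lam m r : R) : R := Lam / 3 * r ^ 2 - 1 + 2 * m / r.

Definition lapse (Lam m r : R) : R := / sqrt (Dsds Lam m r).

(* Functions on the expanding region, in coordinates (r, t, θ, ϕ),
   (θ, ϕ) spherical coordinates on S^2 (chart 0 < θ < π). *)
Definition fn4 := R -> R -> R -> R -> R.

Definition d_r (psi : fn4) : fn4 :=
  fun r t th ph => Derive (fun s => psi s t th ph) r.
Definition d_t (psi : fn4) : fn4 :=
  fun r t th ph => Derive (fun s => psi r s th ph) t.
Definition d_th (psi : fn4) : fn4 :=
  fun r t th ph => Derive (fun s => psi r t s ph) th.
Definition d_ph (psi : fn4) : fn4 :=
  fun r t th ph => Derive (fun s => psi r t th s) ph.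

Definition lap_S2 (psi : fn4) : fn4 :=
  fun r t th ph =>
    / sin th * Derive (fun u => sin u * d_th psi r t u ph) th
    + / (sin th) ^ 2 * d_ph (d_ph psi) r t th ph.

Definition box_g (Lam m : R) (psi : fn4) : fn4 :=
  fun r t th ph =>
    (lapse Lam m r) ^ 2 * d_t (d_t psi) r t th ph
    - / r ^ 2 * Derive (fun s => s ^ 2 / (lapse Lam m s) ^ 2 * d_r psi s t th ph) r
    + / r ^ 2 * lap_S2 psi r t th ph.

Definition Xvf (f : R -> R) (psi : fn4) : fn4 :=
  fun r t th ph => f r * d_r psi r t th ph.

Definition pd (i : nat) : fn4 -> fn4 :=
  match i with 0%nat => d_r | 1%nat => d_t | 2%nat => d_th | _ => d_ph end.
Definition iter_pd (l : list nat) (psi : fn4) : fn4 := fold_right pd psi l.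

Definition uncurry4 (g : fn4) : R * R * R * R -> R :=
  fun p => g (fst (fst (fst p))) (snd (fst (fst p))) (snd (fst p)) (snd p).

Definition smooth_on_region (rC : R) (psi : fn4) : Prop :=
  forall (l : list nat) (r t th ph : R), rC < r -> 0 < th < PI ->
    continuous (uncurry4 (iter_pd l psi)) (r, t, th, ph) /\
    ex_derive (fun s => iter_pd l psi s t th ph) r /\
    ex_derive (fun s => iter_pd l psi r s th ph) t /\
    ex_derive (fun s => iter_pd l psi r t s ph) th /\
    ex_derive (fun s => iter_pd l psi r t th s) ph.

Definition C2_on (rC : R) (f : R -> R) : Prop :=
  forall r, rC < r ->
    ex_derive f r /\ ex_derive (Derive f) r /\ continuous (Derive_n f 2) r.

From Stdlib Require Import Reals Lra List.
From Coquelicot Require Import Coquelicot.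
Open Scope R_scope.

(* Write □ = φ² ∂_t² - R + r⁻² Δ_{S²} with R u = r⁻² ∂_r (A ∂_r u) and A = r² φ⁻².
   Since X = f ∂_r commutes with ∂_t and with the angular derivatives (Schwarz), the
   time part of [□, X] is -f (φ²)' ∂_t² ψ and the angular part is (2f/r) r⁻² Δ_{S²} ψ.
   The radial part is a one-variable identity, valid for arbitrary A and f, in which
   the third derivatives of u cancel:
     R (f u') = f (R u)' - (f²/r²) (A/f²)' (f u')' - (f²/r²) (A/f)'' u' + (2f/r) R u.
   Hence the commutator formula holds for every lapse, with ∂_t² coefficient
   -f ((φ²)' + 2φ²/r); on Schwarzschild-de Sitter φ² = 1/D, and
   (φ²)' + 2φ²/r = -2 φ⁴ (1/r - 3m/r²). *)

(* auto_derive leaves η-expanded [fun x => g x], which ring and field would treat as an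
   atom distinct from [g]. *)
Ltac eta_reduce :=
  repeat match goal with |- context [fun x => ?g x] => change (fun x => g x) with g end.

Definition radial_part (A u : R -> R) (r : R) : R :=
  / r ^ 2 * Derive (fun s => A s * Derive u s) r.

Lemma Derive_mult_locally (g h : R -> R) (r : R) :
  locally r (fun s => ex_derive g s /\ ex_derive h s) ->
  locally r (fun s => Derive (fun x => g x * h x) s = Derive g s * h s + g s * Derive h s).
Proof. apply filter_imp. intros s [Hg Hh]. exact (Derive_mult g h s Hg Hh). Qed.

Lemma locally_of_forall_gt (P : R -> Prop) (a r : R) :
  a < r -> (forall s, a < s -> P s) -> locally r P.
Proof. intros Hr HP. apply (filter_imp (fun s => a < s)); [exact HP | now apply open_gt]. Qed.

Section Radial.
Variables (A f u : R -> R) (r : R).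
Hypothesis Hr : r <> 0.
Hypothesis HA : locally r (fun s => ex_derive A s /\ ex_derive (Derive A) s).
Hypothesis Hf : locally r (fun s => f s <> 0 /\ ex_derive f s /\ ex_derive (Derive f) s).
Hypothesis Hu : locally r (fun s =>
  ex_derive u s /\ ex_derive (Derive u) s /\ ex_derive (Derive (Derive u)) s).

Lemma is_derive_radial_part :
  is_derive (radial_part A u) r
    (- 2 / r ^ 3 * (Derive A r * Derive u r + A r * Derive (Derive u) r)
     + / r ^ 2 * (Derive (Derive A) r * Derive u r + 2 * Derive A r * Derive (Derive u) r
                  + A r * Derive (Derive (Derive u)) r)).
Proof.
  destruct (locally_singleton _ _ HA) as [HA1 HA2].
  destruct (locally_singleton _ _ Hu) as [Hu1 [Hu2 Hu3]].
  apply (is_derive_ext_loc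
    (fun s => / s ^ 2 * (Derive A s * Derive u s + A s * Derive (Derive u) s))).
  { apply (filter_imp (fun s => Derive (fun x => A x * Derive u x) s
                               = Derive A s * Derive u s + A s * Derive (Derive u) s)).
    - intros s Hs. unfold radial_part. now rewrite Hs.
    - apply Derive_mult_locally. generalize (filter_and _ _ HA Hu). apply filter_imp. tauto. }
  auto_derive.
  - repeat split; auto.
  - eta_reduce. field. exact Hr.
Qed.

Lemma radial_part_commutator :
  radial_part A (fun s => f s * Derive u s) r =
    f r * Derive (radial_part A u) r
    - f r ^ 2 / r ^ 2 * Derive (fun s => A s / f s ^ 2) r * Derive (fun s => f s * Derive u s) r
    - f r ^ 2 / r ^ 2 * Derive_n (fun s => A s / f s) 2 r * Derive u r
    + 2 * f r / r * radial_part A u r.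
Proof.
  destruct (locally_singleton _ _ HA) as [HA1 HA2].
  destruct (locally_singleton _ _ Hf) as [Hf0 [Hf1 Hf2]].
  destruct (locally_singleton _ _ Hu) as [Hu1 [Hu2 Hu3]].
  assert (HXu : locally r (fun s => Derive (fun x => f x * Derive u x) s
                                  = Derive f s * Derive u s + f s * Derive (Derive u) s)).
  { apply Derive_mult_locally. generalize (filter_and _ _ Hf Hu). apply filter_imp. tauto. }
  assert (Hflux : Derive (fun s => A s * Derive (fun x => f x * Derive u x) s) r
     = Derive A r * (Derive f r * Derive u r + f r * Derive (Derive u) r)
       + A r * (Derive (Derive f) r * Derive u r + 2 * Derive f r * Derive (Derive u) r
                + f r * Derive (Derive (Derive u)) r)).
  { rewrite (Derive_ext_loc _
      (fun s => A s * (Derive f s * Derive u s + f s * Derive (Derive u) s))).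
    - apply is_derive_unique. auto_derive; [repeat split; auto | eta_reduce; ring].
    - revert HXu. apply filter_imp. intros s Hs. now rewrite Hs. }
  assert (Hquot : Derive (fun s => A s / f s ^ 2) r
     = Derive A r / f r ^ 2 - 2 * A r * Derive f r / f r ^ 3).
  { apply is_derive_unique. auto_derive; [repeat split; auto | eta_reduce; field; auto]. }
  assert (Hquot2 : Derive_n (fun s => A s / f s) 2 r
     = Derive (Derive A) r / f r - 2 * Derive A r * Derive f r / f r ^ 2
       - A r * Derive (Derive f) r / f r ^ 2 + 2 * A r * Derive f r ^ 2 / f r ^ 3).
  { simpl. rewrite (Derive_ext_loc _ (fun s => (Derive A s * f s - A s * Derive f s) / f s ^ 2)).
    - apply is_derive_unique. auto_derive; [repeat split; auto | eta_reduce; field; auto].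
    - generalize (filter_and _ _ HA Hf). apply filter_imp. intros s [[HAs _] [Hfs [Hf1s _]]].
      apply is_derive_unique. auto_derive; [repeat split; auto | eta_reduce; field; auto]. }
  unfold radial_part at 1. cbv beta.
  rewrite Hflux, Hquot, Hquot2, (is_derive_unique _ _ _ is_derive_radial_part),
    (locally_singleton _ _ HXu).
  unfold radial_part. rewrite Derive_mult by auto. field. auto.
Qed.

End Radial.

Lemma smooth_on_region_iter_pd rC psi l :
  smooth_on_region rC psi -> smooth_on_region rC (iter_pd l psi).
Proof.
  intros Hpsi l' r t th ph Hr Hth. unfold iter_pd. rewrite <- fold_right_app. now apply Hpsi.
Qed.

Lemma smooth_ex_derive_r rC psi l r t th ph :
  smooth_on_region rC psi -> rC < r -> 0 < th < PI ->
  ex_derive (fun s => iter_pd l psi s t th ph) r.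
Proof. intros Hpsi Hr Hth. now destruct (Hpsi l r t th ph Hr Hth) as [_ [? _]]. Qed.

Lemma smooth_slice_r_locally rC psi r t th ph :
  smooth_on_region rC psi -> rC < r -> 0 < th < PI ->
  let u := fun s => psi s t th ph in
  locally r (fun s =>
    ex_derive u s /\ ex_derive (Derive u) s /\ ex_derive (Derive (Derive u)) s).
Proof.
  intros Hpsi Hr Hth u. apply (locally_of_forall_gt _ rC r Hr). intros s Hs. repeat split.
  - exact (smooth_ex_derive_r rC psi nil s t th ph Hpsi Hs Hth).
  - exact (smooth_ex_derive_r rC psi (0%nat :: nil) s t th ph Hpsi Hs Hth).
  - exact (smooth_ex_derive_r rC psi (0%nat :: 0%nat :: nil) s t th ph Hpsi Hs Hth).
Qed.

Lemma locally_2d_of_box (P : R -> R -> Prop) a b c x y :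
  a < x -> b < y < c -> (forall u v, a < u -> b < v < c -> P u v) -> locally_2d P x y.
Proof.
  intros Hx Hy HP.
  assert (Hd : 0 < Rmin (x - a) (Rmin (y - b) (c - y))) by (repeat apply Rmin_glb_lt; lra).
  exists (mkposreal _ Hd). simpl. intros u v Hu Hv.
  apply Rabs_def2 in Hu; apply Rabs_def2 in Hv.
  pose proof (Rmin_l (x - a) (Rmin (y - b) (c - y))).
  pose proof (Rmin_r (x - a) (Rmin (y - b) (c - y))).
  pose proof (Rmin_l (y - b) (c - y)). pose proof (Rmin_r (y - b) (c - y)).
  apply HP; lra.
Qed.

Lemma continuity_2d_pt_slice_t (g : fn4) r t th ph :
  continuous (uncurry4 g) (r, t, th, ph) -> continuity_2d_pt (fun u v => g u v th ph) r t.
Proof.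
  intros Hg. apply continuity_2d_pt_filterlim.
  refine (filterlim_comp _ _ _ (fun z : R * R => (fst z, snd z, th, ph)) _ _ _ _ _ Hg).
  intros P [eps HP]. exists eps. intros [u v] [Hu Hv]. apply HP.
  repeat split; try apply ball_center; assumption.
Qed.

Lemma continuity_2d_pt_slice_th (g : fn4) r t th ph :
  continuous (uncurry4 g) (r, t, th, ph) -> continuity_2d_pt (fun u v => g u t v ph) r th.
Proof.
  intros Hg. apply continuity_2d_pt_filterlim.
  refine (filterlim_comp _ _ _ (fun z : R * R => (fst z, t, snd z, ph)) _ _ _ _ _ Hg).
  intros P [eps HP]. exists eps. intros [u v] [Hu Hv]. apply HP.
  repeat split; try apply ball_center; assumption.
Qed.

Lemma continuity_2d_pt_slice_ph (g : fn4) r t th ph :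
  continuous (uncurry4 g) (r, t, th, ph) -> continuity_2d_pt (fun u v => g u t th v) r ph.
Proof.
  intros Hg. apply continuity_2d_pt_filterlim.
  refine (filterlim_comp _ _ _ (fun z : R * R => (fst z, t, th, snd z)) _ _ _ _ _ Hg).
  intros P [eps HP]. exists eps. intros [u v] [Hu Hv]. apply HP.
  repeat split; try apply ball_center; assumption.
Qed.

Lemma d_r_pd_comm rC psi i r t th ph :
  smooth_on_region rC psi -> i <> 0%nat -> rC < r -> 0 < th < PI ->
  d_r (pd i psi) r t th ph = pd i (d_r psi) r t th ph.
Proof.
  intros Hpsi Hi Hr Hth.
  destruct i as [|[|[|i]]]; [contradiction | cbn [pd] ..].
  - apply (Schwarz (fun u v => psi u v th ph)).
    + apply (locally_2d_of_box _ rC (t - 1) (t + 1)); try lra. intros u v Hu _.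
      destruct (Hpsi nil u v th ph) as [_ [? [? _]]]; auto.
      destruct (Hpsi (1%nat :: nil) u v th ph) as [_ [? _]]; auto.
      destruct (Hpsi (0%nat :: nil) u v th ph) as [_ [_ [? _]]]; auto.
    + apply (continuity_2d_pt_slice_t (iter_pd (0%nat :: 1%nat :: nil) psi)), Hpsi; auto.
    + apply (continuity_2d_pt_slice_t (iter_pd (1%nat :: 0%nat :: nil) psi)), Hpsi; auto.
  - apply (Schwarz (fun u v => psi u t v ph)).
    + apply (locally_2d_of_box _ rC 0 PI); try lra. intros u v Hu Hv.
      destruct (Hpsi nil u t v ph) as [_ [? [_ [? _]]]]; auto.
      destruct (Hpsi (2%nat :: nil) u t v ph) as [_ [? _]]; auto.
      destruct (Hpsi (0%nat :: nil) u t v ph) as [_ [_ [_ [? _]]]]; auto.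
    + apply (continuity_2d_pt_slice_th (iter_pd (0%nat :: 2%nat :: nil) psi)), Hpsi; auto.
    + apply (continuity_2d_pt_slice_th (iter_pd (2%nat :: 0%nat :: nil) psi)), Hpsi; auto.
  - apply (Schwarz (fun u v => psi u t th v)).
    + apply (locally_2d_of_box _ rC (ph - 1) (ph + 1)); try lra. intros u v Hu _.
      destruct (Hpsi nil u t th v) as [_ [? [_ [_ ?]]]]; auto.
      destruct (Hpsi (3%nat :: nil) u t th v) as [_ [? _]]; auto.
      destruct (Hpsi (0%nat :: nil) u t th v) as [_ [_ [_ [_ ?]]]]; auto.
    + apply (continuity_2d_pt_slice_ph (iter_pd (0%nat :: 3%nat :: nil) psi)), Hpsi; auto.
    + apply (continuity_2d_pt_slice_ph (iter_pd (3%nat :: 0%nat :: nil) psi)), Hpsi; auto.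
Qed.

Lemma pd_ext_region rC i (g h : fn4) r t th ph :
  i <> 0%nat ->
  (forall r t th ph, rC < r -> 0 < th < PI -> g r t th ph = h r t th ph) ->
  rC < r -> 0 < th < PI -> pd i g r t th ph = pd i h r t th ph.
Proof.
  intros Hi Hgh Hr Hth.
  destruct i as [|[|[|i]]]; [contradiction | cbn [pd] ..].
  - apply Derive_ext. auto.
  - apply Derive_ext_loc.
    apply (filter_imp (fun u => 0 < u < PI)); [auto|].
    apply (open_and _ _ (open_gt 0) (open_lt PI)). exact Hth.
  - apply Derive_ext. auto.
Qed.

Lemma d_r_iter_pd_comm rC psi l r t th ph :
  smooth_on_region rC psi -> List.Forall (fun i => i <> 0%nat) l ->
  rC < r -> 0 < th < PI ->
  d_r (iter_pd l psi) r t th ph = iter_pd l (d_r psi) r t th ph.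
Proof.
  intros Hpsi Hl. revert r t th ph.
  induction Hl as [|i l Hi Hl IH]; intros r t th ph Hr Hth; [reflexivity|].
  change (d_r (pd i (iter_pd l psi)) r t th ph = pd i (iter_pd l (d_r psi)) r t th ph).
  rewrite (d_r_pd_comm rC) by (auto; now apply smooth_on_region_iter_pd).
  now apply (pd_ext_region rC).
Qed.

Lemma d_t_d_t_Xvf f psi r t th ph :
  d_t (d_t (Xvf f psi)) r t th ph = f r * d_t (d_t (d_r psi)) r t th ph.
Proof.
  unfold d_t, Xvf. rewrite <- Derive_scal. apply Derive_ext. intro s. apply Derive_scal.
Qed.

Lemma lap_S2_Xvf f psi r t th ph :
  lap_S2 (Xvf f psi) r t th ph = f r * lap_S2 (d_r psi) r t th ph.
Proof.
  assert (Hth : forall u, d_th (Xvf f psi) r t u ph = f r * d_th (d_r psi) r t u ph)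
    by (intro; apply Derive_scal).
  assert (Hph : d_ph (d_ph (Xvf f psi)) r t th ph = f r * d_ph (d_ph (d_r psi)) r t th ph).
  { unfold d_ph, Xvf. rewrite <- Derive_scal. apply Derive_ext. intro s. apply Derive_scal. }
  unfold lap_S2. rewrite Hph.
  rewrite (Derive_ext (fun u => sin u * d_th (Xvf f psi) r t u ph)
                      (fun u => f r * (sin u * d_th (d_r psi) r t u ph)))
    by (intro; rewrite Hth; ring).
  rewrite Derive_scal. ring.
Qed.

Lemma lap_S2_expand rC psi r t th ph :
  smooth_on_region rC psi -> rC < r -> 0 < th < PI ->
  lap_S2 psi r t th ph =
    / sin th * (cos th * d_th psi r t th ph + sin th * d_th (d_th psi) r t th ph)
    + / sin th ^ 2 * d_ph (d_ph psi) r t th ph.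
Proof.
  intros Hpsi Hr Hth. unfold lap_S2. do 2 f_equal.
  apply is_derive_unique.
  destruct (Hpsi (2%nat :: nil) r t th ph) as [_ [_ [_ [? _]]]]; auto.
  auto_derive; [assumption |].
  change (Derive (fun x => d_th psi r t x ph) th) with (d_th (d_th psi) r t th ph). ring.
Qed.

Lemma is_derive_r_lap_S2 rC psi r t th ph :
  smooth_on_region rC psi -> rC < r -> 0 < th < PI ->
  is_derive (fun s => lap_S2 psi s t th ph) r (lap_S2 (d_r psi) r t th ph).
Proof.
  intros Hpsi Hr Hth.
  apply (is_derive_ext_loc (fun s =>
    / sin th * (cos th * d_th psi s t th ph + sin th * d_th (d_th psi) s t th ph)
    + / sin th ^ 2 * d_ph (d_ph psi) s t th ph)).
  { apply (locally_of_forall_gt _ rC r Hr). intros s Hs.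
    symmetry. now apply (lap_S2_expand rC). }
  assert (Hsin : 0 < sin th) by (apply sin_gt_0; lra).
  pose proof (smooth_ex_derive_r rC psi (2%nat :: nil) r t th ph Hpsi Hr Hth).
  pose proof (smooth_ex_derive_r rC psi (2%nat :: 2%nat :: nil) r t th ph Hpsi Hr Hth).
  pose proof (smooth_ex_derive_r rC psi (3%nat :: 3%nat :: nil) r t th ph Hpsi Hr Hth).
  assert (C1 : d_th (d_r psi) r t th ph = d_r (d_th psi) r t th ph)
    by (symmetry; apply (d_r_iter_pd_comm rC psi (2%nat :: nil)); auto).
  assert (C2 : d_th (d_th (d_r psi)) r t th ph = d_r (d_th (d_th psi)) r t th ph)
    by (symmetry; apply (d_r_iter_pd_comm rC psi (2%nat :: 2%nat :: nil)); auto).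
  assert (C3 : d_ph (d_ph (d_r psi)) r t th ph = d_r (d_ph (d_ph psi)) r t th ph)
    by (symmetry; apply (d_r_iter_pd_comm rC psi (3%nat :: 3%nat :: nil)); auto).
  rewrite (lap_S2_expand rC (d_r psi)), C1, C2, C3
    by (auto; exact (smooth_on_region_iter_pd rC psi (0%nat :: nil) Hpsi)).
  auto_derive; [repeat split; auto | unfold d_r; field; lra].
Qed.

(* [box_g Lam m] is [box_op (fun s => lapse Lam m s ^ 2) (fun s => s ^ 2 / lapse Lam m s ^ 2)]
   up to conversion. *)
Definition box_op (w A : R -> R) (psi : fn4) : fn4 :=
  fun r t th ph =>
    w r * d_t (d_t psi) r t th ph
    - radial_part A (fun s => psi s t th ph) r
    + / r ^ 2 * lap_S2 psi r t th ph.

Section Commutator.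
Variables (rC : R) (w A f : R -> R).
Hypothesis HrC : 0 <= rC.
Hypothesis Hw : forall s, rC < s -> ex_derive w s.
Hypothesis HA : forall s, rC < s -> ex_derive A s /\ ex_derive (Derive A) s.
Hypothesis Hf : C2_on rC f.
Hypothesis Hf0 : forall s, rC < s -> f s <> 0.

Lemma locally_regular_A r :
  rC < r -> locally r (fun s => ex_derive A s /\ ex_derive (Derive A) s).
Proof. intros Hr. exact (locally_of_forall_gt _ rC r Hr HA). Qed.

Lemma locally_regular_f r :
  rC < r -> locally r (fun s => f s <> 0 /\ ex_derive f s /\ ex_derive (Derive f) s).
Proof.
  intros Hr. apply (locally_of_forall_gt _ rC r Hr). intros s Hs.
  destruct (Hf s Hs) as [? [? _]]. auto.
Qed.

Lemma is_derive_r_box_op (psi : fn4) r t th ph :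
  smooth_on_region rC psi -> rC < r -> 0 < th < PI ->
  is_derive (fun s => box_op w A psi s t th ph) r
    (Derive w r * d_t (d_t psi) r t th ph + w r * d_r (d_t (d_t psi)) r t th ph
     - Derive (radial_part A (fun s => psi s t th ph)) r
     - 2 / r ^ 3 * lap_S2 psi r t th ph + / r ^ 2 * lap_S2 (d_r psi) r t th ph).
Proof.
  intros Hpsi Hr Hth.
  assert (Hr0 : r <> 0) by lra.
  pose proof (is_derive_radial_part A _ r Hr0 (locally_regular_A r Hr)
                (smooth_slice_r_locally rC psi r t th ph Hpsi Hr Hth)) as Hrad.
  pose proof (is_derive_r_lap_S2 rC psi r t th ph Hpsi Hr Hth) as Hlap.
  unfold box_op. auto_derive.
  - repeat split.
    + exact (Hw r Hr).
    + exact (smooth_ex_derive_r rC psi (1%nat :: 1%nat :: nil) r t th ph Hpsi Hr Hth).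
    + eexists. exact Hrad.
    + rewrite Rmult_1_r. now apply Rmult_integral_contrapositive_currified.
    + eexists. exact Hlap.
  - rewrite (is_derive_unique (fun x : R => lap_S2 psi x t th ph) _ _ Hlap). eta_reduce.
    change (Derive (fun x => d_t (d_t psi) x t th ph) r) with (d_r (d_t (d_t psi)) r t th ph).
    field. exact Hr0.
Qed.

Lemma box_op_Xvf (psi : fn4) r t th ph :
  smooth_on_region rC psi -> rC < r -> 0 < th < PI ->
  box_op w A (Xvf f psi) r t th ph =
    Xvf f (box_op w A psi) r t th ph
    + f r ^ 2 / r ^ 2 * Derive (fun s => A s / f s ^ 2) r * d_r (Xvf f psi) r t th ph
    + f r ^ 2 / r ^ 2 * Derive_n (fun s => A s / f s) 2 r * d_r psi r t th ph
    - f r * (Derive w r + 2 * w r / r) * d_t (d_t psi) r t th ph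
    + 2 * f r / r * box_op w A psi r t th ph.
Proof.
  intros Hpsi Hr Hth.
  pose (u := fun s => psi s t th ph).
  assert (Hr0 : r <> 0) by lra.
  assert (Htime : d_t (d_t (d_r psi)) r t th ph = d_r (d_t (d_t psi)) r t th ph)
    by (symmetry; apply (d_r_iter_pd_comm rC psi (1%nat :: 1%nat :: nil)); auto).
  assert (HX : Xvf f (box_op w A psi) r t th ph =
    f r * (Derive w r * d_t (d_t psi) r t th ph + w r * d_r (d_t (d_t psi)) r t th ph
           - Derive (radial_part A u) r
           - 2 / r ^ 3 * lap_S2 psi r t th ph + / r ^ 2 * lap_S2 (d_r psi) r t th ph))
    by (unfold Xvf, d_r at 1; f_equal; exact (is_derive_unique _ _ _
          (is_derive_r_box_op psi r t th ph Hpsi Hr Hth))).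
  unfold box_op at 1.
  change (radial_part A (fun s => Xvf f psi s t th ph) r)
    with (radial_part A (fun s => f s * Derive u s) r).
  rewrite (radial_part_commutator A f u r Hr0 (locally_regular_A r Hr) (locally_regular_f r Hr)
             (smooth_slice_r_locally rC psi r t th ph Hpsi Hr Hth)).
  rewrite d_t_d_t_Xvf, lap_S2_Xvf, HX, Htime.
  unfold box_op. fold u.
  change (d_r (Xvf f psi) r t th ph) with (Derive (fun s => f s * Derive u s) r).
  change (d_r psi r t th ph) with (Derive u r).
  field. auto.
Qed.

End Commutator.

Lemma Dsds_continuous Lam m r : 0 < r -> continuity_pt (Dsds Lam m) r.
Proof.
  intros Hr. apply continuity_pt_filterlim, (ex_derive_continuous (Dsds Lam m)).
  unfold Dsds. auto_derive. lra.
Qed.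

Lemma is_derive_Dsds Lam m r : r <> 0 ->
  is_derive (Dsds Lam m) r (2 * Lam / 3 * r - 2 * m / r ^ 2).
Proof. intros Hr. unfold Dsds. auto_derive; [exact Hr | field; exact Hr]. Qed.

Lemma Dsds_pos_far Lam m r :
  0 < Lam -> 0 <= m -> 0 < r -> 0 < Dsds Lam m (r + 1 + 3 / Lam).
Proof.
  intros HLam Hm Hr. set (R1 := r + 1 + 3 / Lam).
  assert (H3 : Lam * (3 / Lam) = 3) by (field; lra).
  assert (H3p : 0 < 3 / Lam) by (apply Rdiv_lt_0_compat; lra).
  assert (0 <= 2 * m / R1) by (apply Rdiv_le_0_compat; unfold R1; lra).
  assert (Lam * R1 > 3) by (unfold R1; nra).
  assert (Lam * R1 * R1 > 3) by (unfold R1 in *; nra).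
  unfold Dsds. replace (Lam / 3 * R1 ^ 2) with (Lam * R1 * R1 / 3) by field. lra.
Qed.

Lemma Dsds_pos Lam m rC r :
  0 < Lam -> 0 <= m -> 0 < rC ->
  (forall r, 0 < r -> Dsds Lam m r = 0 -> r <= rC) -> rC < r -> 0 < Dsds Lam m r.
Proof.
  intros HLam Hm HrC Hlargest Hr.
  destruct (Rtotal_order 0 (Dsds Lam m r)) as [Hpos | [Hzero | Hneg]]; [exact Hpos | |].
  - assert (r <= rC) by (apply Hlargest; auto; lra). lra.
  - pose proof (Dsds_pos_far Lam m r HLam Hm ltac:(lra)) as Hfar.
    assert (H3p : 0 < 3 / Lam) by (apply Rdiv_lt_0_compat; lra).
    destruct (Ranalysis5.IVT_interv (Dsds Lam m) r (r + 1 + 3 / Lam)) as [z [Hz Hz0]];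
      [intros a Ha; apply Dsds_continuous; lra | lra | lra | exact Hfar |].
    assert (z <= rC) by (apply Hlargest; auto; lra). lra.
Qed.

Lemma lapse_sqr Lam m s : 0 < Dsds Lam m s -> lapse Lam m s ^ 2 = / Dsds Lam m s.
Proof. intros HD. unfold lapse. rewrite pow_inv, <- Rsqr_pow2, Rsqr_sqrt; lra. Qed.

Section Lapse.
Variables (Lam m rC : R).
Hypothesis HrC : 0 <= rC.
Hypothesis HD : forall s, rC < s -> 0 < Dsds Lam m s.

Lemma sqr_div_lapse_sqr s :
  rC < s -> s ^ 2 / lapse Lam m s ^ 2 = Lam / 3 * s ^ 4 - s ^ 2 + 2 * m * s.
Proof.
  intros Hs. rewrite lapse_sqr by auto. unfold Rdiv. rewrite Rinv_inv. unfold Dsds. field. lra.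
Qed.

Lemma ex_derive2_sqr_div_lapse_sqr s : rC < s ->
  ex_derive (fun z => z ^ 2 / lapse Lam m z ^ 2) s /\
  ex_derive (Derive (fun z => z ^ 2 / lapse Lam m z ^ 2)) s.
Proof.
  intros Hs.
  assert (Hpoly : forall x, rC < x -> locally x (fun z =>
    Lam / 3 * z ^ 4 - z ^ 2 + 2 * m * z = z ^ 2 / lapse Lam m z ^ 2)).
  { intros x Hx. apply (locally_of_forall_gt _ rC x Hx). intros z Hz.
    now rewrite sqr_div_lapse_sqr. }
  split.
  - apply (ex_derive_ext_loc _ _ s (Hpoly s Hs)). auto_derive. exact I.
  - apply (ex_derive_ext_loc (fun x => 4 * Lam / 3 * x ^ 3 - 2 * x + 2 * m)).
    + apply (locally_of_forall_gt _ rC s Hs). intros x Hx.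
      transitivity (Derive (fun z => Lam / 3 * z ^ 4 - z ^ 2 + 2 * m * z) x).
      * symmetry. apply is_derive_unique. auto_derive; [exact I | field].
      * now apply Derive_ext_loc, Hpoly.
    + auto_derive. exact I.
Qed.

Lemma ex_derive_lapse_sqr s : rC < s -> ex_derive (fun z => lapse Lam m z ^ 2) s.
Proof.
  intros Hs. pose proof (HD s Hs). unfold lapse, Dsds in *.
  auto_derive. repeat split; try lra.
  apply Rgt_not_eq, sqrt_lt_R0. lra.
Qed.

Lemma Derive_lapse_sqr r : rC < r ->
  Derive (fun s => lapse Lam m s ^ 2) r + 2 * lapse Lam m r ^ 2 / r
  = - 2 * lapse Lam m r ^ 4 * (/ r - 3 * m / r ^ 2).
Proof.
  intros Hr. pose proof (HD r Hr) as HDr.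
  assert (Hw : Derive (fun s => lapse Lam m s ^ 2) r
               = - (2 * Lam / 3 * r - 2 * m / r ^ 2) / Dsds Lam m r ^ 2).
  { transitivity (Derive (fun s => / Dsds Lam m s) r).
    - apply Derive_ext_loc, (locally_of_forall_gt _ rC r Hr).
      intros s Hs. apply lapse_sqr, HD, Hs.
    - apply is_derive_unique, is_derive_inv; [apply is_derive_Dsds |]; lra. }
  assert (Hlin : 2 * Lam / 3 * r - 2 * m / r ^ 2 - 2 * Dsds Lam m r / r
                 = 2 * (/ r - 3 * m / r ^ 2))
    by (unfold Dsds; field; lra).
  replace (lapse Lam m r ^ 4) with ((lapse Lam m r ^ 2) ^ 2) by ring.
  rewrite Hw, lapse_sqr by exact HDr.
  transitivity
    (- / Dsds Lam m r ^ 2 * (2 * Lam / 3 * r - 2 * m / r ^ 2 - 2 * Dsds Lam m r / r));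
    [field; lra | rewrite Hlin; field; lra].
Qed.

End Lapse.

Theorem lemma4p1 (Lam m rC : R) (f : R -> R) (psi : fn4)
  (HLam : 0 < Lam) (Hm : 0 < 3 * m) (HmL : 3 * m < / sqrt Lam)
  (HrC_pos : 0 < rC) (HrC_root : Dsds Lam m rC = 0)
  (HrC_largest : forall r, 0 < r -> Dsds Lam m r = 0 -> r <= rC)
  (Hf : C2_on rC f) (Hfpos : forall r, rC < r -> 0 < f r)
  (Hpsi : smooth_on_region rC psi) :
  forall r t th ph, rC < r -> 0 < th < PI ->
    box_g Lam m (Xvf f psi) r t th ph =
      Xvf f (box_g Lam m psi) r t th ph
      + (f r) ^ 2 / r ^ 2
          * Derive (fun s => s ^ 2 / (lapse Lam m s) ^ 2 / (f s) ^ 2) r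
          * d_r (Xvf f psi) r t th ph
      + (f r) ^ 2 / r ^ 2
          * Derive_n (fun s => s ^ 2 / (lapse Lam m s) ^ 2 / f s) 2 r
          * d_r psi r t th ph
      + 2 * f r * (lapse Lam m r) ^ 4 * (/ r - 3 * m / r ^ 2)
          * d_t (d_t psi) r t th ph
      + 2 * f r / r * box_g Lam m psi r t th ph.
Proof.
  intros r t th ph Hr Hth.
  (* HmL and HrC_root only serve to make rC exist: positivity of D beyond rC
     uses just that rC is its largest root. *)
  assert (HD : forall s, rC < s -> 0 < Dsds Lam m s)
    by (intros s Hs; apply (Dsds_pos Lam m rC); auto; lra).
  assert (HrC : 0 <= rC) by lra.
  change (box_g Lam m)
    with (box_op (fun s => lapse Lam m s ^ 2) (fun s => s ^ 2 / lapse Lam m s ^ 2)).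
  rewrite (box_op_Xvf rC); auto.
  - cbv beta. rewrite (Derive_lapse_sqr Lam m rC) by auto. ring.
  - intros s Hs. now apply (ex_derive_lapse_sqr Lam m rC).
  - intros s Hs. now apply (ex_derive2_sqr_div_lapse_sqr Lam m rC).
  - intros s Hs. specialize (Hfpos s Hs). lra.
Qed.
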